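(* Let $s$ be an integer such that $3s^2-4s+4$ is a perfect square, let $F_s(t)= t^4 + (4s^3 - 4s^2 + 8s - 4)t^3 + (-6s^2 - 6)t^2 + 4t + 1$, and let $K_s$ be its splitting field over $\mathbb{Q}$. Put $$f=\frac{s+\sqrt{3s^2-4s+4}}{2},\qquad g=\frac{s-\sqrt{3s^2-4s+4}}{2}$$ (integers), and let $M$ be the linear fractional transformation $$M\theta=\frac{f\theta-1}{\frac{f^2+g^2}{2}\theta-g}.$$ Then $\mathrm{Gal}(K_s/\mathbb{Q})$ is cyclic of order $4$, $K_s=\mathbb{Q}(r)$ for any root $r$ of $F_s$, and there is a generator $\sigma$ of $\mathrm{Gal}(K_s/\mathbb{Q})$ such that $\sigma(r)=Mr$ for every root $r$ of $F_s$. *)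

From HB Require Import structures.
From mathcomp Require Import all_boot all_order all_algebra all_fingroup all_solvable all_field.
Set Implicit Arguments. Unset Strict Implicit. Unset Printing Implicit Defensive.
Import GRing.Theory Num.Theory.
Local Open Scope ring_scope.

Definition Fs (s : int) : {poly rat} :=
  'X^4 + ((4 * s ^+ 3 - 4 * s ^+ 2 + 8 * s - 4)%:~R)%:P * 'X^3
  + ((- 6 * s ^+ 2 - 6)%:~R)%:P * 'X^2 + 4%:P * 'X + 1.

(* The Moebius map M theta = (f theta - 1) / (((f^2+g^2)/2) theta - g),
   with f = (s+m)/2, g = (s-m)/2, m = sqrt(3s^2-4s+4). *)
Definition Mf (L : fieldType) (s m : int) : L := (s + m)%:~R / 2.
Definition Mg (L : fieldType) (s m : int) : L := (s - m)%:~R / 2.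
Definition Mden (L : fieldType) (s m : int) (x : L) : L :=
  (Mf L s m ^+ 2 + Mg L s m ^+ 2) / 2 * x - Mg L s m.
Definition Mmap (L : fieldType) (s m : int) (x : L) : L :=
  (Mf L s m * x - 1) / Mden s m x.

(* Write f, g = (s +- m)/2 and h = (f^2 + g^2)/2, so that M is the Moebius map of the matrix
   A = [[f, -1], [h, -g]].  Since m^2 = 3s^2 - 4s + 4, the homogenised quartic satisfies
   F(f x - 1, h x - g) = F(f, h) F(x, 1), so M maps roots of F_s to roots.  Moreover
   A^2 = (f - g) [[t, -1], [h, -t]] with t = (f + g)/2 has trace zero, so M^4 fixes every root,
   while a root fixed by M^2 would satisfy the rational quadratic (s^2 - s + 1) x^2 - s x + 1 = 0,
   which is impossible since F_s is irreducible (by Gauss's lemma and a look at integer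
   factorisations).  Hence the four roots are r, Mr, M^2 r, M^3 r, they lie in Q(r) because M
   has rational coefficients, and the automorphism sending r to Mr commutes with M, acts as M
   on all roots and generates the Galois group, which is therefore cyclic of order 4. *)

From HB Require Import structures.
From mathcomp Require Import all_boot all_order all_algebra all_fingroup all_solvable all_field.
From mathcomp Require Import zify ring.

Set Implicit Arguments. Unset Strict Implicit. Unset Printing Implicit Defensive.
Import GRing.Theory Num.Theory.
Local Open Scope ring_scope.

Lemma int_mul_eq1 (x y : int) : x * y = 1 -> x = y /\ (x = 1 \/ x = -1).
Proof. by move=> h; case/orP: (intUnitRing.unitzPl h) => /eqP hy; subst y; lia. Qed.

Lemma sqr_int_neq3 (m : int) : m ^+ 2 != 3.
Proof.
apply/eqP => h; have : m <= -2 \/ -1 <= m <= 1 \/ 2 <= m by lia.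
nia.
Qed.

Lemma int_sum_prod_neq (x y : int) : (x + y) ^+ 2 = 16 -> x * y = -4 -> False.
Proof.
move=> h1 h2; have : (x - y) ^+ 2 = 32 by nia.
have : x - y <= -6 \/ -5 <= x - y <= 5 \/ 6 <= x - y by lia.
nia.
Qed.

Lemma coefM_size3 (R : nzRingType) (p r : {poly R}) :
  (size p <= 3)%N -> (size r <= 3)%N ->
  [/\ (p * r)`_1 = p`_0 * r`_1 + p`_1 * r`_0,
      (p * r)`_2 = p`_0 * r`_2 + p`_1 * r`_1 + p`_2 * r`_0
    & (p * r)`_3 = p`_1 * r`_2 + p`_2 * r`_1].
Proof.
move=> size_p size_r; have p3 : p`_3 = 0 by rewrite nth_default.
have r3 : r`_3 = 0 by rewrite nth_default.
by rewrite !coefM !big_ord_recr !big_ord0 /= p3 r3 !subnn !subn0 mulr0 mul0r !add0r !addr0.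
Qed.

Lemma size_quadratic (R : nzRingType) (a b c : R) :
  (size (a%:P * 'X ^+ 2 + b%:P * 'X + c%:P)%R <= 3)%N.
Proof.
apply/leq_sizeP => j j_ge3; rewrite !(coefD, coefCM, coefXn, coefX, coefC).
by case: j j_ge3 => [|[|[|j]]] //= _; rewrite !(mulr0, addr0).
Qed.

Section IntegerModel.
Variables s m : int.
Hypothesis hm : m ^+ 2 = 3 * s ^+ 2 - 4 * s + 4.

Lemma sqrt_disc_neq0 : m != 0.
Proof. by apply/eqP => m0; move: hm; rewrite m0; nia. Qed.

Definition Fa : int := 4 * s ^+ 3 - 4 * s ^+ 2 + 8 * s - 4.
Definition Fb : int := - 6 * s ^+ 2 - 6.
Definition Fint : {poly int} := ((('X + Fa%:P) * 'X + Fb%:P) * 'X + 4%:P) * 'X + 1%:P.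

Lemma size_Fint : size Fint = 5%N.
Proof.
have XaddC_neq0 : ('X + Fa%:P == 0) = false by rewrite -size_poly_eq0 size_XaddC.
by rewrite /Fint !size_MXaddC size_XaddC XaddC_neq0 /= !andbF.
Qed.

Lemma coef_Fint : [/\ Fint`_0 = 1, Fint`_1 = 4, Fint`_2 = Fb, Fint`_3 = Fa & Fint`_4 = 1].
Proof. by rewrite /Fint !(coefD, coefMX, coefC, coefX) /=; split; ring. Qed.

Lemma Fa_eq_pm4 : Fa = 4 \/ Fa = -4 -> s = 0 \/ s = 1.
Proof.
rewrite /Fa => Fa4; have : s <= -1 \/ 2 <= s \/ s = 0 \/ s = 1 by lia.
by case=> [s_neg | [s_ge2 | //]]; nia.
Qed.

Lemma lead_coef_Fint : lead_coef Fint = 1.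
Proof. by rewrite /lead_coef size_Fint; case: coef_Fint. Qed.

Lemma horner_Fint x : Fint.[x] = x ^+ 4 + Fa * x ^+ 3 + Fb * x ^+ 2 + 4 * x + 1.
Proof. by rewrite /Fint !hornerMXaddC hornerD hornerX hornerC; ring. Qed.

Lemma map_Fint : map_poly intr Fint = Fs s.
Proof.
apply/polyP => i; rewrite coef_map /= /Fint /Fs.
rewrite !(coefD, coefMX, coefC, coefX, coefCM, coefXn) /=.
by case: i => [|[|[|[|[|i]]]]] /=; rewrite /Fa /Fb !(add0r, addr0, mulr0, mulr1).
Qed.

Lemma Fint_pm1_neq0 (x : int) : x = 1 \/ x = -1 -> Fint.[x] != 0.
Proof.
rewrite horner_Fint /Fa /Fb => -[] ->; apply/eqP => h.
  have : s <= 0 \/ s = 1 \/ s = 2 \/ 3 <= s by lia.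
  nia.
have : (2 * s + 1) * (s ^+ 2 + 2) = 0.
  by apply: (mulfI (_ : -2 != 0)) => //; rewrite mulr0 -[RHS]h; ring.
by move/eqP; rewrite mulf_eq0 => /orP[] /eqP; lia.
Qed.

Lemma Fint_no_linear_factor (p r : {poly int}) : Fint = p * r -> size p != 2%N.
Proof.
move=> Fpr; apply/eqP => size_p.
have [_ p1_unit] : p`_1 = lead_coef r /\ (p`_1 = 1 \/ p`_1 = -1).
  have lead_p : lead_coef p = p`_1 by rewrite /lead_coef size_p.
  by apply: int_mul_eq1; rewrite -lead_coef_Fint Fpr lead_coefM lead_p.
have [_ p0_unit] : p`_0 = r`_0 /\ (p`_0 = 1 \/ p`_0 = -1).
  by apply: int_mul_eq1; rewrite -coef0M -Fpr; case: coef_Fint.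
have horner_p x : p.[x] = p`_0 + p`_1 * x.
  by rewrite horner_coef size_p !big_ord_recl big_ord0 /= expr0 mulr1 expr1 addr0.
have p_root : p.[- p`_0 * p`_1] = 0.
  by rewrite horner_p; case: p0_unit => ->; case: p1_unit => ->; ring.
suff : Fint.[- p`_0 * p`_1] != 0 by rewrite Fpr hornerM p_root mul0r eqxx.
apply: Fint_pm1_neq0.
by case: p0_unit => ->; case: p1_unit => ->; [right | left | left | right]; ring.
Qed.

Lemma Fint_no_quadratic_factor (p r : {poly int}) :
  Fint = p * r -> size p = 3%N -> size r = 3%N -> False.
Proof.
(* The units p`_0 = r`_0 and p`_2 = r`_2 make the coefficients of 'X and 'X^3 equal to
   +-(p`_1 + r`_1), so Fa = +-4 and s is 0 or 1; s = 1 would make 3 a square, and s = 0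
   leaves p`_1 + r`_1 = +-4 with p`_1 * r`_1 = -4. *)
move=> Fpr size_p size_r.
have [_ c1 c2 c3 _] := coef_Fint.
have [e1 e2 e3] := coefM_size3 (eq_leq size_p) (eq_leq size_r).
rewrite -Fpr c1 in e1; rewrite -Fpr c2 in e2; rewrite -Fpr c3 in e3.
have [p0E p0_unit] : p`_0 = r`_0 /\ (p`_0 = 1 \/ p`_0 = -1).
  by apply: int_mul_eq1; rewrite -coef0M -Fpr; case: coef_Fint.
have [p2E p2_unit] : p`_2 = r`_2 /\ (p`_2 = 1 \/ p`_2 = -1).
  have lead_p : lead_coef p = p`_2 by rewrite /lead_coef size_p.
  have lead_r : lead_coef r = r`_2 by rewrite /lead_coef size_r.
  by apply: int_mul_eq1; rewrite -lead_p -lead_r -lead_coefM -Fpr lead_coef_Fint.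
rewrite -p0E -p2E in e1 e2 e3; move: e1 e2 e3.
move: (p`_0) (p`_1) (p`_2) (r`_1) p0_unit p2_unit => p0 p1 p2 r1 p0_unit p2_unit e1 e2 e3.
have [s0 | s1] : s = 0 \/ s = 1.
  by apply: Fa_eq_pm4; case: p0_unit => p0E'; case: p2_unit => p2E'; subst; lia.
- move: e1 e2 e3; rewrite /Fa /Fb s0 => e1 e2 e3.
  by apply: (@int_sum_prod_neq p1 r1); case: p0_unit => p0E'; case: p2_unit => p2E'; subst; nia.
- by apply/eqP: (@sqr_int_neq3 m); rewrite hm s1.
Qed.

Lemma Fint_factor_size (p r : {poly int}) : Fint = p * r -> (1 < size p)%N -> size p = 5%N.
Proof.
move=> Fpr size_p_gt1.
have /andP[p_neq0 r_neq0] : (p != 0) && (r != 0).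
  by rewrite -negb_or -mulf_eq0 -Fpr -size_poly_eq0 size_Fint.
have : (size p + size r).-1 = 5%N by rewrite -size_mul // -Fpr size_Fint.
have := Fint_no_linear_factor Fpr; have := Fint_no_quadratic_factor Fpr.
rewrite mulrC in Fpr; have := Fint_no_linear_factor Fpr.
move: size_p_gt1; rewrite -size_poly_gt0 in r_neq0.
case: (size p) => [|[|[|[|[|[|k]]]]]] //; case: (size r) r_neq0 => [|[|[|[|n]]]] //=; lia.
Qed.

Lemma size_Fs : size (Fs s) = 5%N.
Proof. by rewrite -map_Fint size_rat_int_poly size_Fint. Qed.

Lemma Fs_irreducible : irreducible_poly (Fs s).
Proof.
split=> [|q size_q_neq1 q_dvd]; first by rewrite size_Fs.
move: (q_dvd); rewrite -{1}map_Fint => /dvdpP_rat_int[p [a a_neq0 q_def] [r Fpr]].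
rewrite -dvdp_size_eqp // size_Fs; apply/eqP.
move: size_q_neq1; rewrite q_def size_scale // size_rat_int_poly => size_p_neq1.
apply: (Fint_factor_size Fpr); rewrite ltn_neqAle eq_sym size_p_neq1 size_poly_gt0.
by apply: contraTneq isT => p0; move: size_Fint; rewrite Fpr p0 mul0r size_poly0.
Qed.

End IntegerModel.

Definition Fs_hom (K : nzRingType) (s u v : K) : K :=
  u ^+ 4 + (4 * s ^+ 3 - 4 * s ^+ 2 + 8 * s - 4) * u ^+ 3 * v
  + (- 6 * s ^+ 2 - 6) * u ^+ 2 * v ^+ 2 + 4 * u * v ^+ 3 + v ^+ 4.

Lemma half_sqr_sum_eq (K : fieldType) (s m : K) : 2 != 0 :> K ->
  m ^+ 2 = 3 * s ^+ 2 - 4 * s + 4 -> (((s + m) / 2) ^+ 2 + ((s - m) / 2) ^+ 2) / 2 = s ^+ 2 - s + 1.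
Proof.
move=> two_neq0 hm; have four_neq0 : 4 != 0 :> K by rewrite -[4%N]/(2 * 2)%N natrM mulf_neq0.
have -> : (((s + m) / 2) ^+ 2 + ((s - m) / 2) ^+ 2) / 2 = (s ^+ 2 + m ^+ 2) / 4.
  by field; rewrite four_neq0 two_neq0.
by rewrite hm; field; rewrite four_neq0.
Qed.

Lemma Fs_hom_mobius (K : fieldType) (s m x : K) : 2 != 0 :> K ->
  m ^+ 2 = 3 * s ^+ 2 - 4 * s + 4 ->
  let f := (s + m) / 2 in let g := (s - m) / 2 in let h := (f ^+ 2 + g ^+ 2) / 2 in
  Fs_hom s (f * x - 1) (h * x - g) = Fs_hom s f h * Fs_hom s x 1.
Proof.
move=> two_neq0 hm f g h; rewrite /h /f half_sqr_sum_eq // -/f.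
apply/eqP; rewrite -subr_eq0; apply/eqP.
(* [Q] is the quotient of the difference of both sides by [m ^+ 2 - (3 * s ^+ 2 - 4 * s + 4)]
   in the polynomial division with respect to [m]. *)
pose Q := - s * (s ^+ 2 - 2 * s + 2) * (s ^+ 2 + 2) / 2
  - 2 * (s ^+ 5 - 2 * s ^+ 4 + 4 * s ^+ 3 - 5 * s ^+ 2 + 4 * s - 2) * x
  + 3 * s * (s ^+ 6 - 2 * s ^+ 5 + 5 * s ^+ 4 - 6 * s ^+ 3 + 7 * s ^+ 2 - 4 * s + 2) * x ^+ 2
  - 2 * (s ^+ 8 - 3 * s ^+ 7 + 8 * s ^+ 6 - 13 * s ^+ 5 + 18 * s ^+ 4 - 17 * s ^+ 3
         + 13 * s ^+ 2 - 6 * s + 2) * x ^+ 3.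
suff -> : Fs_hom s (f * x - 1) ((s ^+ 2 - s + 1) * x - g)
  - Fs_hom s f (s ^+ 2 - s + 1) * Fs_hom s x 1 = (m ^+ 2 - (3 * s ^+ 2 - 4 * s + 4)) * m * Q.
  by rewrite hm subrr !mul0r.
by rewrite /Fs_hom /Q /f /g; field; exact: two_neq0.
Qed.

Lemma Fs_hom_div (K : fieldType) (s u v : K) : v != 0 ->
  Fs_hom s (u / v) 1 = Fs_hom s u v / v ^+ 4.
Proof. by move=> v_neq0; rewrite /Fs_hom; field. Qed.

Section Mobius.
Variable K : fieldType.

Definition mobius (a b c d x : K) : K := (a * x + b) / (c * x + d).

Lemma mobius_den_comp a b c d c' d' x : c * x + d != 0 ->
  (c' * a + d' * c) * x + (c' * b + d' * d) = (c' * mobius a b c d x + d') * (c * x + d).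
Proof. by move=> den_neq0; rewrite /mobius; field. Qed.

Lemma mobius_comp a b c d a' b' c' d' x :
  c * x + d != 0 -> c' * mobius a b c d x + d' != 0 ->
  mobius a' b' c' d' (mobius a b c d x)
  = mobius (a' * a + b' * c) (a' * b + b' * d) (c' * a + d' * c) (c' * b + d' * d) x.
Proof.
move=> den_neq0 den'_neq0; rewrite [RHS]/mobius (@mobius_den_comp a b c d c' d') //.
have -> : (a' * a + b' * c) * x + (a' * b + b' * d)
    = (a' * mobius a b c d x + b') * (c * x + d) by rewrite /mobius; field.
by rewrite -mulf_div divff // mulr1.
Qed.

Lemma mobius_scale k a b c d x : k != 0 ->
  mobius (k * a) (k * b) (k * c) (k * d) x = mobius a b c d x.
Proof. by move=> k_neq0; rewrite /mobius -!mulrA -!mulrDr invfM mulrACA divff ?mul1r. Qed.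

Lemma mobius_fixed a b c d x : c * x + d != 0 -> mobius a b c d x = x ->
  c * x ^+ 2 + (d - a) * x - b = 0.
Proof.
move=> den_neq0 /(congr1 ( *%R^~ (c * x + d))); rewrite /mobius divfK // => fix_x.
by transitivity (x * (c * x + d) - (a * x + b)); [ring | rewrite fix_x subrr].
Qed.

Lemma mobius_id a x : a != 0 -> mobius a 0 0 a x = x.
Proof. by move=> a_neq0; rewrite /mobius !addr0 mul0r add0r mulrAC divff ?mul1r. Qed.

Lemma mobius_involutive a b c x : a ^+ 2 + b * c != 0 -> c * x - a != 0 ->
  mobius a b c (- a) (mobius a b c (- a) x) = x.
Proof.
move=> det_neq0 den_neq0.
have den2_neq0 : c * mobius a b c (- a) x + - a != 0.
  have := @mobius_den_comp a b c (- a) c (- a) x den_neq0.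
  have -> : (c * a + - a * c) * x + (c * b + - a * - a) = a ^+ 2 + b * c by ring.
  by move=> det_eq; move: det_neq0; rewrite det_eq mulf_eq0 negb_or => /andP[].
rewrite mobius_comp //.
have -> : c * a + - a * c = 0 by ring.
have -> : a * b + b * - a = 0 by ring.
have -> : a * a + b * c = a ^+ 2 + b * c by ring.
have -> : c * b + - a * - a = a ^+ 2 + b * c by ring.
exact: mobius_id.
Qed.
End Mobius.

Section MobiusOrderFour.
Variables (K : fieldType) (f g : K).
Hypotheses (two_neq0 : 2 != 0 :> K) (f_neq_g : f != g).

Let h := (f ^+ 2 + g ^+ 2) / 2.
Let t := (f + g) / 2.
Local Notation A := (mobius f (-1) h (- g)).
Local Notation N := (mobius t (-1) h (- t)).

Lemma f_sub_g_neq0 : f - g != 0. Proof. by rewrite subr_eq0. Qed.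

Lemma mobius_pole_num_neq0 x : h * x - g = 0 -> f * x - 1 != 0.
Proof.
move=> /eqP; rewrite subr_eq => /eqP pole; apply: contra_neq f_sub_g_neq0 => /eqP.
rewrite subr_eq0 => /eqP f_x.
have h_fg : h = f * g by rewrite -[h]mulr1 -[X in _ * X]f_x mulrCA pole add0r.
have : (f - g) ^+ 2 = 2 * (h - f * g) by rewrite /h; field.
by rewrite h_fg subrr mulr0 => /eqP; rewrite expf_eq0 => /eqP.
Qed.

Lemma mobius_sqr_den x : h * x - g != 0 -> h * A x - g != 0 -> h * x - t != 0.
Proof.
move=> den_neq0 den'_neq0.
have := @mobius_den_comp _ f (-1) h (- g) h (- g) x den_neq0.
have -> : (h * f + - g * h) * x + (h * -1 + - g * - g) = (f - g) * (h * x - t).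
  by rewrite /h /t; field.
by move=> den_eq; move: (mulf_neq0 den'_neq0 den_neq0); rewrite -den_eq mulf_eq0 negb_or => /andP[].
Qed.

Lemma mobius_sqr x : h * x - g != 0 -> h * A x - g != 0 -> A (A x) = N x.
Proof.
move=> den_neq0 den'_neq0; rewrite mobius_comp //.
rewrite -(@mobius_scale _ (f - g) t) ?f_sub_g_neq0 //.
by congr mobius; rewrite /h /t; field.
Qed.

Lemma mobius_pow4 x : h * x - g != 0 -> h * A x - g != 0 -> h * A (A x) - g != 0 ->
  h * A (A (A x)) - g != 0 -> A (A (A (A x))) = x.
Proof.
move=> den0 den1 den2 den3; rewrite mobius_sqr // mobius_sqr //.
rewrite mobius_involutive ?mobius_sqr_den //.
have -> : t ^+ 2 + -1 * h = - ((f - g) / 2) ^+ 2 by rewrite /t /h; field.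
by rewrite oppr_eq0 expf_eq0 /= mulf_eq0 negb_or f_sub_g_neq0 invr_eq0.
Qed.

Lemma mobius_sqr_fixed x : h * x - g != 0 -> h * A x - g != 0 -> A (A x) = x ->
  h * x ^+ 2 - (f + g) * x + 1 = 0.
Proof.
move=> den0 den1; rewrite mobius_sqr // => /(mobius_fixed (mobius_sqr_den den0 den1)) fixed.
by rewrite -[RHS]fixed /t; field.
Qed.
End MobiusOrderFour.

Lemma rmorph_Mmap (K K' : fieldType) (phi : {rmorphism K -> K'}) s m (y : K) :
  phi (Mmap s m y) = Mmap s m (phi y).
Proof.
have phi2 : phi 2 = 2 by rewrite rmorph_nat.
have phi_f : phi (Mf K s m) = Mf K' s m by rewrite /Mf fmorph_div rmorph_int phi2.
have phi_g : phi (Mg K s m) = Mg K' s m by rewrite /Mg fmorph_div rmorph_int phi2.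
by rewrite /Mmap /Mden !(phi2, phi_f, phi_g, fmorph_div, fmorphV, rmorphB, rmorphD, rmorphM, rmorphXn, rmorph1).
Qed.

Section MobiusOnRoots.
Variables (L : fieldExtType rat) (s m : int).
Hypothesis hm : m ^+ 2 = 3 * s ^+ 2 - 4 * s + 4.

Local Notation p := (map_poly (in_alg L) (Fs s)).
Local Notation M := (Mmap s m).
Local Notation f := (Mf L s m).
Local Notation g := (Mg L s m).

Lemma intr_alg_eq0 (z : int) : (z%:~R == 0 :> L) = (z == 0).
Proof. by rewrite -(rmorph_int (in_alg L)) fmorph_eq0 intr_eq0. Qed.

Lemma two_alg_neq0 : 2 != 0 :> L.
Proof. by rewrite -(rmorph_nat (in_alg L)) fmorph_eq0 pnatr_eq0. Qed.

Lemma horner_Fs x : p.[x] = Fs_hom (s%:~R) x 1.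
Proof.
rewrite /Fs !(rmorphD, rmorphM, rmorphXn, rmorph1) /= !map_polyC map_polyX.
rewrite !(hornerD, hornerM, hornerXn, hornerC, hornerX) /Fs_hom.
ring.
Qed.

Lemma sqrt_disc_alg : (m%:~R : L) ^+ 2 = 3 * s%:~R ^+ 2 - 4 * s%:~R + 4.
Proof. by rewrite -rmorphXn hm; ring. Qed.

Lemma MfE : f = (s%:~R + m%:~R) / 2. Proof. by rewrite /Mf intrD. Qed.
Lemma MgE : g = (s%:~R - m%:~R) / 2. Proof. by rewrite /Mg intrB. Qed.

Lemma Mf_add_Mg : f + g = s%:~R.
Proof. by rewrite MfE MgE; field; exact: two_alg_neq0. Qed.

Lemma Mf_sub_Mg : f - g = m%:~R.
Proof. by rewrite MfE MgE; field; exact: two_alg_neq0. Qed.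

Lemma Mf_neq_Mg : f != g.
Proof. by rewrite -subr_eq0 Mf_sub_Mg intr_alg_eq0 (sqrt_disc_neq0 hm). Qed.

Lemma Mh_int : (f ^+ 2 + g ^+ 2) / 2 = (s ^+ 2 - s + 1)%:~R.
Proof. by rewrite MfE MgE half_sqr_sum_eq ?two_alg_neq0 ?sqrt_disc_alg //; ring. Qed.

Lemma Fs_hom_Mmap x :
  Fs_hom (s%:~R) (f * x - 1) (Mden s m x) = Fs_hom (s%:~R) f ((f ^+ 2 + g ^+ 2) / 2) * p.[x].
Proof. by rewrite horner_Fs /Mden MfE MgE (Fs_hom_mobius x two_alg_neq0 sqrt_disc_alg). Qed.

Lemma root_Fs_Mmap r : root p r -> Mden s m r != 0 /\ root p (M r).
Proof.
move=> /eqP r_root; have := Fs_hom_Mmap r; rewrite r_root mulr0 => Fs_hom_eq0.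
have den_neq0 : Mden s m r != 0.
  apply/eqP => den0; move: Fs_hom_eq0; rewrite den0 /Fs_hom !(expr0n, mulr0, addr0) /=.
  by move=> /eqP; rewrite expf_eq0 (negPf (mobius_pole_num_neq0 two_alg_neq0 Mf_neq_Mg den0)).
split=> //; apply/eqP.
by rewrite horner_Fs /Mmap Fs_hom_div // Fs_hom_eq0 mul0r.
Qed.

Lemma root_Fs_iter k r : root p r -> root p (iter k M r).
Proof. by move=> r_root; elim: k => //= k IH; case: (root_Fs_Mmap IH). Qed.

Lemma Mden_iter_neq0 k r : root p r -> Mden s m (iter k M r) != 0.
Proof. by move=> /(root_Fs_iter k) /root_Fs_Mmap[]. Qed.

Lemma iter4_Mmap r : root p r -> iter 4 M r = r.
Proof.
move=> r_root; have den k := Mden_iter_neq0 k r_root.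
exact: (mobius_pow4 two_alg_neq0 Mf_neq_Mg (den 0%N) (den 1%N) (den 2%N) (den 3%N)).
Qed.

Lemma Fs_polyOver1 : p \is a polyOver 1%VS.
Proof. by apply/polyOver1P; exists (Fs s). Qed.

Lemma minPoly_Fs r : root p r -> minPoly 1 r %= p.
Proof.
move=> r_root.
have [q min_q] : exists q, minPoly 1 r = map_poly (in_alg L) q.
  by apply/polyOver1P; apply: minPolyOver.
have q_dvd : q %| Fs s by rewrite -(dvdp_map (in_alg L)) -min_q minPoly_dvdp ?Fs_polyOver1.
have size_q : size q != 1%N.
  by rewrite -(size_map_poly (in_alg L)) -min_q neq_ltn size_minPoly orbT.
by rewrite min_q eqp_map; apply: (Fs_irreducible hm).2.
Qed.

Lemma root_Fs_size_min r (q : {poly rat}) : root p r -> q != 0 ->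
  root (map_poly (in_alg L) q) r -> (5 <= size q)%N.
Proof.
move=> r_root q_neq0 q_root.
have : minPoly 1 r %| map_poly (in_alg L) q.
  by rewrite minPoly_dvdp //; apply/polyOver1P; exists q.
move=> /dvdp_leq; rewrite map_poly_eq0 size_map_poly (eqp_size (minPoly_Fs r_root)).
by rewrite size_map_poly size_Fs; apply.
Qed.

Lemma iter2_Mmap_neq r : root p r -> iter 2 M r != r.
Proof.
move=> r_root; apply/eqP => fixed.
have := mobius_sqr_fixed two_alg_neq0 Mf_neq_Mg (Mden_iter_neq0 0 r_root) (Mden_iter_neq0 1 r_root) fixed.
rewrite Mh_int Mf_add_Mg => quad_r.
pose q : {poly rat} := ((s ^+ 2 - s + 1)%:~R)%:P * 'X ^+ 2 + (- s%:~R)%:P * 'X + 1%:P.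
have size_q : (size q <= 3)%N := size_quadratic _ _ _.
suff : (5 <= size q)%N by move: size_q; lia.
have horner_q (x : L) : (map_poly (in_alg L) q).[x] = (s ^+ 2 - s + 1)%:~R * x ^+ 2 - s%:~R * x + 1.
  rewrite /q !(rmorphD, rmorphN, rmorphM, rmorphXn, rmorph1) /= !map_polyC map_polyX.
  by rewrite !(hornerD, hornerN, hornerM, hornerC, hornerX, hornerXn); ring.
apply: (root_Fs_size_min r_root); last by rewrite /root horner_q quad_r.
have q_at0 : q.[0] = 1 by rewrite /q !(hornerD, hornerM, hornerC, hornerX, hornerXn); ring.
by apply: contra_neq (oner_neq0 rat) => q_eq0; rewrite -q_at0 q_eq0 horner0.
Qed.

Lemma iter_Mmap_neq k r : root p r -> (0 < k < 4)%N -> iter k M r != r.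
Proof.
move=> r_root /andP[k_gt0 k_lt4].
have M_neq w : root p w -> M w != w.
  by move=> w_root; apply: contra_neq (iter2_Mmap_neq w_root) => Mw; rewrite /= !Mw.
case: k k_gt0 k_lt4 => [|[|[|[|k]]]] // _ _.
- exact: M_neq.
- exact: iter2_Mmap_neq.
- apply: contra_neq (M_neq _ r_root) => iter3_r.
  by rewrite -{1}iter3_r; exact: iter4_Mmap.
Qed.

Lemma uniq_traject_Mmap r : root p r -> uniq (traject M r 4).
Proof.
move=> r_root; rewrite looping_uniq; apply/trajectP => -[i i_lt3 iter3_eq].
have /negP[] : iter (3 - i) M (iter i M r) != iter i M r.
  by apply: iter_Mmap_neq; [exact: root_Fs_iter | lia].
by rewrite -iterD subnK ?iter3_eq // ltnW.
Qed.

Lemma root_Fs_traject r w : root p r -> root p w -> w \in traject M r 4.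
Proof.
move=> r_root w_root; apply: contraT => w_notin.
have p_neq0 : p != 0 by rewrite -size_poly_eq0 size_map_poly size_Fs.
have all_roots : all (root p) (w :: traject M r 4).
  apply/allP => x; rewrite inE => /orP[/eqP -> // | /trajectP[i _ ->]].
  exact: root_Fs_iter.
have uniq_roots : uniq (w :: traject M r 4) by rewrite cons_uniq w_notin uniq_traject_Mmap.
by have := max_poly_roots p_neq0 all_roots uniq_roots; rewrite size_map_poly size_Fs.
Qed.

End MobiusOnRoots.

Lemma mem_Mmap (L : fieldExtType rat) (K : {subfield L}) s m y : y \in K -> Mmap s m y \in K.
Proof.
move=> Ky; rewrite /Mmap /Mden /Mf /Mg.
by repeat apply: rpred_div || apply: rpredB || apply: rpredD || apply: rpredM
  || apply: rpredX || apply: rpred_int || apply: rpred_nat || apply: rpred1 || exact: Ky.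
Qed.

Section GaloisGroup.
Variables (s m : int) (L : splittingFieldType rat) (E : {subfield L}).
Hypothesis hm : m ^+ 2 = 3 * s ^+ 2 - 4 * s + 4.
Local Notation p := (map_poly (in_alg L) (Fs s)).
Local Notation M := (Mmap s m).
Hypothesis splitE : splittingFieldFor 1 p E.

Lemma root_Fs_mem r : root p r -> r \in E.
Proof.
have [rs Dp <-] := splitE => r_root; apply: seqv_sub_adjoin.
by rewrite -root_prod_XsubC -(eqp_root Dp).
Qed.

Lemma adjoin_root_Fs r : root p r -> E = <<1; r>>%AS.
Proof.
move=> r_root; apply/val_inj/eqP; rewrite /= eqEsubv; apply/andP; split; last first.
  by apply/FadjoinP; split; [exact: sub1v | exact: root_Fs_mem].
have [rs Dp <-] := splitE; apply/Fadjoin_seqP; split; first exact: sub1v.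
move=> w; rewrite -root_prod_XsubC -(eqp_root Dp) => w_root.
have /trajectP[i _ ->] := root_Fs_traject hm r_root w_root.
by elim: i => [|i IH]; [exact: memv_adjoin | exact: mem_Mmap].
Qed.

Lemma exists_root_Fs : exists r, root p r.
Proof.
have [rs Dp _] := splitE.
have : size rs = 4%N by move: (eqp_size Dp); rewrite size_map_poly size_Fs size_prod_XsubC => -[].
case: rs Dp => // r rs Dp _; exists r.
by rewrite (eqp_root Dp) root_prod_XsubC mem_head.
Qed.

Lemma gal_eq_on_root (x y : gal_of E) r : root p r ->
  x \in 'Gal(E / 1)%g -> y \in 'Gal(E / 1)%g -> x r = y r -> x = y.
Proof.
move=> r_root galx galy xr_yr; apply/eqP/gal_eqP => a Ea.
have /Fadjoin_polyP[q q_over1 ->] : a \in <<1; r>>%AS by rewrite -(adjoin_root_Fs r_root).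
by rewrite -!horner_map !(fixedPoly_gal (sub1v E)) //= xr_yr.
Qed.

Lemma exists_gal_Mmap :
  exists2 sigma, sigma \in 'Gal(E / 1)%g & forall r, root p r -> sigma r = M r.
Proof.
have [r0 r0_root] := exists_root_Fs.
have normalE : normalField 1 E.
  by apply/splitting_normalField; [exact: sub1v | exists p; [exact: Fs_polyOver1 | exact: splitE]].
have [sigma gal_sigma sigma_r0] : exists2 sigma, sigma \in 'Gal(E / 1)%g & sigma r0 = M r0.
  apply: normalField_root_minPoly (sub1v E) normalE (root_Fs_mem r0_root) _.
  by rewrite (eqp_root (minPoly_Fs hm r0_root)); case: (root_Fs_Mmap hm r0_root).
exists sigma => // r r_root; have /trajectP[i _ ->] := root_Fs_traject hm r0_root r_root.
by elim: i => [|i IH] //=; rewrite rmorph_Mmap; congr M.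
Qed.

Section Generator.
Variable sigma : gal_of E.
Hypotheses (gal_sigma : sigma \in 'Gal(E / 1)%g) (sigmaM : forall r, root p r -> sigma r = M r).

Lemma gal_iter_Mmap k r : root p r -> (sigma ^+ k)%g r = iter k M r.
Proof.
move=> r_root; elim: k => [|k IH]; first by rewrite expg0 gal_id.
by rewrite expgSr galM ?root_Fs_mem // IH sigmaM //; apply: root_Fs_iter.
Qed.

Lemma order_gal_Mmap : #[sigma]%g = 4%N.
Proof.
have [r0 r0_root] := exists_root_Fs.
have sigma4 : (sigma ^+ 4)%g = 1%g.
  apply: (gal_eq_on_root r0_root); rewrite ?groupX ?group1 //.
  by rewrite gal_iter_Mmap // gal_id iter4_Mmap.
have sigma2 : (sigma ^+ 2)%g != 1%g.
  apply: contra_neq (iter2_Mmap_neq hm r0_root) => sigma2.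
  by rewrite -gal_iter_Mmap // sigma2 gal_id.
have : (#[sigma]%g %| 4)%N by rewrite order_dvdn sigma4.
have : ~~ (#[sigma]%g %| 2)%N by rewrite order_dvdn.
by case: #[sigma]%g => [|[|[|[|[|n]]]]].
Qed.

Lemma gal_Fs_cycle : 'Gal(E / 1)%g = <[sigma]>%g.
Proof.
apply/eqP; rewrite eqEsubset cycle_subG gal_sigma andbT; apply/subsetP => x gal_x.
have [r0 r0_root] := exists_root_Fs.
have x_r0_root : root p (x r0).
  by rewrite -(eqp_root (minPoly_Fs hm r0_root)) root_minPoly_gal ?sub1v ?root_Fs_mem.
have /trajectP[i _ x_r0] := root_Fs_traject hm r0_root x_r0_root.
rewrite (gal_eq_on_root r0_root gal_x (groupX i gal_sigma)) ?mem_cycle //.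
by rewrite gal_iter_Mmap.
Qed.
End Generator.
End GaloisGroup.

Theorem mainTheorem5 (s m : int) (hm0 : 0 <= m)
    (hm : m ^+ 2 = 3 * s ^+ 2 - 4 * s + 4)
    (L : splittingFieldType rat) (E : {subfield L})
    (hE : splittingFieldFor 1%VS (map_poly (in_alg L) (Fs s)) E) :
  [/\ cyclic ('Gal(E / 1%VS))%g, #|('Gal(E / 1%VS))%g| = 4%N,
      (forall r : L, root (map_poly (in_alg L) (Fs s)) r -> E = <<1%VS; r>>%VS)
    & exists2 sigma : gal_of E, generator ('Gal(E / 1%VS))%g sigma &
        forall r : L, root (map_poly (in_alg L) (Fs s)) r ->
          Mden s m r != 0 /\ sigma r = Mmap s m r].
Proof.
have [sigma gal_sigma sigmaM] := exists_gal_Mmap hm hE.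
have gal_cycle := gal_Fs_cycle hm hE gal_sigma sigmaM.
split.
- by apply/cyclicP; exists sigma.
- by rewrite gal_cycle -orderE (order_gal_Mmap hm hE gal_sigma sigmaM).
- by move=> r /(adjoin_root_Fs hm hE).
- exists sigma; first by rewrite /generator gal_cycle.
  by move=> r r_root; split; [case: (root_Fs_Mmap hm r_root) | exact: sigmaM].
Qed.
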